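(* Let $\epsilon\in\{0,\frac12\}$. Every 2-local automorphism of $\mathrm{SVir}[\epsilon]$ is an automorphism of $\mathrm{SVir}[\epsilon]$.
   Context: For $\epsilon\in\{0,\frac12\}$, the super Virasoro algebra $\mathrm{SVir}[\epsilon]$ is the Lie superalgebra over $\mathbb{C}$ with basis $\{L_m, G_r, C : m\in\mathbb{Z}, r\in\mathbb{Z}+\epsilon\}$, even part spanned by the $L_m$ and $C$, odd part spanned by the $G_r$, and brackets $[L_m,L_n]=(m-n)L_{m+n}+\frac{1}{12}\delta_{m+n,0}(m^3-m)C$, $[L_m,G_r]=(\frac m2-r)G_{m+r}$, $[G_r,G_s]=2L_{r+s}+\frac13\delta_{r+s,0}(r^2-\frac14)C$, with $C$ central. An automorphism is an even bijective linear map preserving the bracket. A map $\phi:L\to L$ (not assumed linear) is a 2-local automorphism if for all $x,y\in L$ there is an automorphism $\theta_{x,y}$ of $L$ with $\phi(x)=\theta_{x,y}(x)$ and $\phi(y)=\theta_{x,y}(y)$. *)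

From HB Require Import structures.
From mathcomp Require Import all_boot all_order all_algebra.
From mathcomp Require Import finmap monalg.
From mathcomp Require Import complex.
From mathcomp Require Import Rstruct.
From Stdlib Require Import Rdefinitions.

Set Implicit Arguments.
Unset Strict Implicit.
Unset Printing Implicit Defensive.

Import Order.TTheory GRing.Theory Num.Theory.
Local Open Scope ring_scope.

(* Basis of SVir[eps]:  SL m = L_m (m : int),
   SG k = G_{k + eps} (k : int; the half-integer shift eps is added below),
   SC = the central element C. *)
Inductive sbasis : Type := SL of int | SG of int | SC.

Definition sbasis_enc (b : sbasis) : (int + int) + unit :=
  match b with SL m => inl (inl m) | SG k => inl (inr k) | SC => inr tt end.
Definition sbasis_dec (c : (int + int) + unit) : sbasis :=
  match c with inl (inl m) => SL m | inl (inr k) => SG k | inr _ => SC end.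
Lemma sbasis_encK : cancel sbasis_enc sbasis_dec.
Proof. by case. Qed.
HB.instance Definition _ := Countable.copy sbasis (can_type sbasis_encK).

Definition SV : Type := {malg (complex Rdefinitions.R)[sbasis]}.

Definition sparity (b : sbasis) : bool := if b is SG _ then true else false.

(* Convention: eps : bool encodes epsilon, false <-> 0, true <-> 1/2.
   hshift eps is epsilon as a complex number. *)
Definition hshift (eps : bool) : complex Rdefinitions.R :=
  if eps then 2^-1 else 0.

Definition gidx (eps : bool) (k : int) : complex Rdefinitions.R :=
  k%:~R + hshift eps.

Definition sbr (eps : bool) (a b : sbasis) : SV :=
  match a, b with
  | SL m, SL n =>
      (m - n)%:~R *: << SL (m + n) >>
      + (if m + n == 0 then (m ^+ 3 - m)%:~R / 12%:R else 0) *: << SC >>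
  | SL m, SG k => (m%:~R / 2%:R - gidx eps k) *: << SG (m + k) >>
  | SG k, SL m => - ((m%:~R / 2%:R - gidx eps k) *: << SG (m + k) >>)
  | SG k, SG l =>
      2%:R *: << SL (k + l + (eps : nat)%:Z) >>
      + (if gidx eps k + gidx eps l == 0
         then (gidx eps k ^+ 2 - 4%:R^-1) / 3%:R else 0) *: << SC >>
  | _, _ => 0
  end.

Definition sbracket (eps : bool) (x y : SV) : SV :=
  \sum_(a <- msupp x) \sum_(b <- msupp y) (x@_a * y@_b) *: sbr eps a b.

Definition is_even (x : SV) : bool := all (fun b => ~~ sparity b) (msupp x).
Definition is_odd (x : SV) : bool := all sparity (msupp x).

Definition is_automorphism (eps : bool) (f : SV -> SV) : Prop :=
  [/\ (forall (c : complex Rdefinitions.R) (x y : SV), f (c *: x + y) = c *: f x + f y),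
      bijective f,
      (forall x, is_even x -> is_even (f x)) /\ (forall x, is_odd x -> is_odd (f x))
    & forall x y, f (sbracket eps x y) = sbracket eps (f x) (f y)].

Definition is_2local_automorphism (eps : bool) (phi : SV -> SV) : Prop :=
  forall x y : SV, exists theta : SV -> SV,
    is_automorphism eps theta /\ phi x = theta x /\ phi y = theta y.

(* An automorphism [th] of SVir sends L_0 to +-L_0.  Indeed [th L_0] has no
   component L_n with n <> 0: the extreme one would bound the degrees of all the
   eigenvectors [th b] of [ad (th L_0)], which span SVir; and its central
   component vanishes since L_0 = [L_1, L_{-1}]/2.  Comparing eigenvalues, [th]
   then maps each non-central basis vector to a multiple of its image under the
   basis permutation L_m |-> L_{+-m}, G_r |-> G_{+-r} fixed by that sign.  So [th]
   is determined by its value at s = L_0 + L_{+-1} + L_{+-2} + G_eps + G_{eps-1}: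
   the coefficients of [th s] give the sign and the seven multipliers, and these
   seven vectors generate SVir.  Given a 2-local automorphism phi, pick [th] with
   phi s = th s; for each y, the automorphism matching phi at s and y agrees with
   [th] at s, hence everywhere, so phi y = th y. *)

From HB Require Import structures.
From mathcomp Require Import all_boot all_order all_algebra.
From mathcomp Require Import finmap monalg complex Rstruct.
From mathcomp Require Import ring zify.

Set Implicit Arguments.
Unset Strict Implicit.
Unset Printing Implicit Defensive.

Import Order.TTheory GRing.Theory Num.Theory.
Local Open Scope ring_scope.

Notation CC := (complex Rdefinitions.R).

Lemma sum_seq_single (R : nmodType) (I : eqType) (s : seq I) (F : I -> R) i0 :
  i0 \in s -> uniq s -> (forall i, i \in s -> i != i0 -> F i = 0) ->
  \sum_(i <- s) F i = F i0.
Proof.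
move=> si0 us F0; rewrite (bigD1_seq i0) //= big1_seq ?addr0 // => i /andP[].
by move=> /[swap]; exact: F0.
Qed.

Lemma sum_seq_neq0 (R : nmodType) (I : eqType) (s : seq I) (F : I -> R) :
  \sum_(i <- s) F i != 0 -> exists2 i, i \in s & F i != 0.
Proof.
have [/hasP [i si Fi] _|/hasPn F0] := boolP (has (fun i => F i != 0) s).
  by exists i.
by rewrite big1_seq ?eqxx // => i /andP [_ /F0]; rewrite negbK => /eqP.
Qed.

Lemma exists_seq_argmax (T : eqType) (s : seq T) (P : pred T) (f : T -> int) :
  has P s -> exists x, [/\ x \in s, P x & forall y, y \in s -> P y -> f y <= f x].
Proof.
elim: s => [//|a s IH] /=; case: (boolP (has P s)) => [/IH [m [ms Pm mmax]] _|/hasPn nP Pa].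
- case: (boolP (P a && (f m < f a))) => [/andP [Pa lt]|h].
  + exists a; split=> [||y]; rewrite ?mem_head // in_cons => /orP [/eqP -> //|ys Py].
    exact: le_trans (mmax y ys Py) (ltW lt).
  + exists m; split=> [||y]; rewrite ?in_cons ?ms ?orbT // => /orP [/eqP -> Pa|]; last exact: mmax.
    by move: h; rewrite Pa -leNgt.
- rewrite orbF in Pa; exists a; split=> [||y]; rewrite ?mem_head // in_cons.
  by case/orP => [/eqP -> //|/nP /negP].
Qed.

Lemma int_mul_eq1 (m n : int) : m * n = 1 -> m = 1 \/ m = -1.
Proof. by rewrite mulrC => /intUnitRing.unitzPl /orP [] /eqP; [left | right]. Qed.

Definition linext (F : sbasis -> SV) (y : SV) : SV :=
  \sum_(b <- msupp y) y@_b *: F b.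

Lemma linextEw F y (d : {fset sbasis}) : (msupp y `<=` d)%fset ->
  linext F y = \sum_(b <- d) y@_b *: F b.
Proof.
move=> le; rewrite /linext (big_fset_incl _ le) // => b _ /mcoeff_outdom ->.
by rewrite scale0r.
Qed.

Lemma linext_is_linear F : linear (linext F).
Proof.
move=> c y z; pose d := (msupp y `|` msupp z `|` msupp (c *: y + z))%fset.
rewrite (@linextEw F y d) ?(@linextEw F z d) ?(@linextEw F (c *: y + z) d).
- rewrite scaler_sumr -big_split /=; apply: eq_bigr => b _.
  by rewrite mcoeffD mcoeffZ scalerDl scalerA.
- by rewrite fsubsetUr.
- by rewrite /d -fsetUA fsubsetU // fsubsetUl orbT.
- by rewrite /d -fsetUA fsubsetUl.
Qed.

HB.instance Definition _ F :=
  GRing.isLinear.Build CC SV SV *:%R (linext F) (linext_is_linear F).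

Lemma linextU F b : linext F << b >> = F b.
Proof. by rewrite (linextEw F msuppU_le) big_seq_fset1 mcoeffUU scale1r. Qed.

Lemma eq_linext F G : F =1 G -> linext F =1 linext G.
Proof. by move=> FG y; apply: eq_bigr => b _; rewrite FG. Qed.

Lemma mcoeff_linext F y e : (linext F y)@_e = \sum_(b <- msupp y) y@_b * (F b)@_e.
Proof. by rewrite /linext raddf_sum; apply: eq_bigr => b _ /=; rewrite mcoeffZ. Qed.

Lemma mcoeffZU (c : CC) b e : (c *: << b >> : SV)@_e = c *+ (b == e).
Proof. by rewrite mcoeffZ mcoeffU mulr_natr. Qed.

Lemma mcoeffZU2 (a c : CC) b b' e :
  (a *: << b >> + c *: << b' >> : SV)@_e = a *+ (b == e) + c *+ (b' == e).
Proof. by rewrite mcoeffD [X in X + _]mcoeffZU [X in _ + X]mcoeffZU. Qed.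

Lemma mcoeff_sum_inj (s : seq sbasis) (c : sbasis -> CC) (p : sbasis -> sbasis) b0 :
  injective p -> uniq s -> b0 \in s ->
  (\sum_(b <- s) c b *: << p b >> : SV)@_(p b0) = c b0.
Proof.
move=> p_inj us sb0; rewrite raddf_sum (sum_seq_single sb0) //= ?mcoeffZU ?eqxx ?mulr1n //.
by move=> b _ bb0; rewrite /= mcoeffZU (inj_eq p_inj) (negbTE bb0) mulr0n.
Qed.

Lemma malg_mcoeff_neq0 (v : SV) : v != 0 -> exists e, v@_e != 0.
Proof.
move=> v_nz; have /fset0Pn [e] : msupp v != fset0%fset.
  apply: contraNneq v_nz => supp0; apply/eqP/malgP => e.
  by rewrite mcoeff0 mcoeff_outdom // supp0 in_fset0.
by rewrite -mcoeff_neq0; exists e.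
Qed.

Lemma monalgUZ (c : CC) b : << c *g b >> = c *: << b >> :> SV.
Proof. by apply/malgP => e; rewrite mcoeffU mcoeffZU. Qed.

Section LinearMap.

Variable f : SV -> SV.
Hypothesis f_lin : linear f.

Let fL : {linear SV -> SV} := HB.pack f (GRing.isLinear.Build CC SV SV *:%R f f_lin).

Lemma linmap0 : f 0 = 0. Proof. exact: (linear0 fL). Qed.
Lemma linmapD : {morph f : x y / x + y}. Proof. exact: (linearD fL). Qed.
Lemma linmapZ (c : CC) x : f (c *: x) = c *: f x. Proof. exact: (linearZ_LR fL). Qed.

Lemma linmap_linext : f =1 linext (fun b => f << b >>).
Proof.
move=> y; rewrite {1}[y]monalgE (big_morph f linmapD linmap0) /linext.
by apply: eq_bigr => b _; rewrite monalgUZ linmapZ.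
Qed.

End LinearMap.

Lemma sbracketE eps x y :
  sbracket eps x y = linext (fun a => linext (sbr eps a) y) x.
Proof.
rewrite /sbracket /linext; apply: eq_bigr => a _; rewrite scaler_sumr.
by apply: eq_bigr => b _; rewrite scalerA.
Qed.

Lemma sbracketEr eps x y :
  sbracket eps x y = linext (fun b => linext (sbr eps ^~ b) x) y.
Proof.
rewrite /sbracket exchange_big /linext; apply: eq_bigr => b _; rewrite scaler_sumr.
by apply: eq_bigr => a _; rewrite scalerA mulrC.
Qed.

Lemma sbracketDl eps x x' y :
  sbracket eps (x + x') y = sbracket eps x y + sbracket eps x' y.
Proof. by rewrite !sbracketE linearD. Qed.

Lemma sbracketZl eps (c : CC) x y : sbracket eps (c *: x) y = c *: sbracket eps x y.
Proof. by rewrite !sbracketE linearZ. Qed.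

Lemma sbracketZr eps (c : CC) x y : sbracket eps x (c *: y) = c *: sbracket eps x y.
Proof. by rewrite !sbracketEr linearZ. Qed.

Lemma sbracketUU eps a b : sbracket eps << a >> << b >> = sbr eps a b.
Proof. by rewrite sbracketE !linextU. Qed.

Lemma mcoeff_sbracket eps x y e : (sbracket eps x y)@_e =
  \sum_(a <- msupp x) \sum_(b <- msupp y) x@_a * y@_b * (sbr eps a b)@_e.
Proof.
rewrite /sbracket raddf_sum; apply: eq_bigr => a _; rewrite raddf_sum.
by apply: eq_bigr => b _ /=; rewrite mcoeffZ.
Qed.

Lemma sbracketCl eps v : sbracket eps << SC >> v = 0.
Proof. by rewrite sbracketE linextU /linext big1 // => b _; rewrite scaler0. Qed.

Definition eigL0 eps (b : sbasis) : CC :=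
  match b with SL n => - n%:~R | SG k => - gidx eps k | SC => 0 end.

Lemma sbrL0 eps b : sbr eps (SL 0) b = eigL0 eps b *: << b >>.
Proof.
case: b => [n|k|]; rewrite /sbr /eigL0.
- rewrite !add0r intrN oppr0 mul0r.
  by case: ifP => _; rewrite scale0r addr0.
- by rewrite add0r mul0r sub0r.
- by rewrite scale0r.
Qed.

Lemma mcoeff_linext_diag (c : sbasis -> CC) y e :
  (linext (fun b => c b *: << b >>) y)@_e = c e * y@_e.
Proof.
rewrite (linextEw _ (fsubsetUl (msupp y) [fset e]%fset)) raddf_sum /=.
rewrite (@sum_seq_single _ _ _ _ e) ?fset_uniq ?in_fsetU ?in_fset1 ?eqxx ?orbT //.
  by rewrite /= mcoeffZ mcoeffZU eqxx mulr1n mulrC.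
by move=> b _ be; rewrite /= mcoeffZ mcoeffZU (negbTE be) mulr0n mulr0.
Qed.

Lemma mcoeff_adL0 eps v e : (sbracket eps << SL 0 >> v)@_e = eigL0 eps e * v@_e.
Proof.
by rewrite sbracketE linextU (eq_linext (sbrL0 eps)) mcoeff_linext_diag.
Qed.

Lemma mcoeff_sbracket_L0C eps (a c : CC) v e :
  (sbracket eps (a *: << SL 0 >> + c *: << SC >>) v)@_e = a * eigL0 eps e * v@_e.
Proof.
rewrite sbracketDl [X in X + _]sbracketZl [X in _ + X]sbracketZl sbracketCl.
by rewrite scaler0 addr0 mcoeffZ mcoeff_adL0 mulrA.
Qed.

Lemma mcoeff_sbracketZU eps (a c : CC) b1 b2 e :
  (sbracket eps (a *: << b1 >>) (c *: << b2 >>))@_e = a * c * (sbr eps b1 b2)@_e.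
Proof. by rewrite sbracketZl sbracketZr sbracketUU mcoeffZ mcoeffZ mulrA. Qed.

Lemma mcoeff_even x e : is_even x -> sparity e -> x@_e = 0.
Proof. by move=> /allP xe pe; apply: mcoeff_outdom; apply: contraL pe => /xe. Qed.

Lemma mcoeff_odd x e : is_odd x -> ~~ sparity e -> x@_e = 0.
Proof. by move=> /allP xo; apply: contraNeq; rewrite mcoeff_neq0 => /xo. Qed.

Lemma evenU b : ~~ sparity b -> is_even << b >>.
Proof. by move=> pb; apply/allP => e; rewrite msuppU oner_eq0 in_fset1 => /eqP ->. Qed.

Lemma oddU b : sparity b -> is_odd << b >>.
Proof. by move=> pb; apply/allP => e; rewrite msuppU oner_eq0 in_fset1 => /eqP ->. Qed.

(** * Degree and the leading term of a bracket *)

Definition shift (b : sbasis) (j : int) : sbasis :=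
  match b with SL m => SL (m + j) | SG k => SG (k + j) | SC => SC end.

(* Twice the L_0-weight, an integer in both sectors. *)
Definition deg eps (b : sbasis) : int :=
  match b with SL m => 2 * m | SG k => 2 * k + (eps : nat)%:Z | SC => 0 end.

Definition kappa eps (n : int) (b : sbasis) : CC :=
  match b with SL m => (n - m)%:~R | SG k => n%:~R / 2%:R - gidx eps k | SC => 0 end.

Lemma shift_eqSC b j : (shift b j == SC) = (b == SC).
Proof. by case: b. Qed.

Lemma shift_inj j : injective (shift^~ j).
Proof. by case=> [m|k|] [m'|k'|] //= [] /addIr ->. Qed.

Lemma deg_shift eps b j : b != SC -> deg eps (shift b j) = deg eps b + 2 * j.
Proof. case: b => [m|k|] //= _; lia. Qed.

Lemma sbrLL eps n m : sbr eps (SL n) (SL m) =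
  (n - m)%:~R *: << SL (n + m) >> +
  (if n + m == 0 then (n ^+ 3 - n)%:~R / 12%:R else 0) *: << SC >> :> SV.
Proof. by []. Qed.

Lemma sbrLG eps n k :
  sbr eps (SL n) (SG k) = (n%:~R / 2%:R - gidx eps k) *: << SG (n + k) >> :> SV.
Proof. by []. Qed.

Lemma sbrCl eps b : sbr eps SC b = 0.
Proof. by case: b. Qed.

Lemma mcoeff_sbrL eps n b e : e != SC ->
  (sbr eps (SL n) b)@_e = kappa eps n b *+ (shift b n == e).
Proof.
move=> eC; have Ce : (SC == e) = false by rewrite eq_sym (negbTE eC).
case: b => [m|k|]; rewrite /kappa /shift.
- by rewrite sbrLL mcoeffZU2 Ce mulr0n addr0 [m + n]addrC.
- by rewrite sbrLG mcoeffZU [k + n]addrC.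
- by rewrite [sbr _ _ _]/= mcoeff0 mul0rn.
Qed.

Lemma kappa_eq0 eps n b : b != SC -> kappa eps n b = 0 ->
  deg eps b = 2 * n \/ deg eps b = n.
Proof.
case: b => [m|k|] //= _.
  by move/eqP; rewrite intr_eq0 subr_eq0 => /eqP ->; left.
move=> h; right; have : ((n - (2 * k + (eps : nat)%:Z))%:~R : CC) = 0.
  rewrite -[RHS](mulr0 2%:R) -h /gidx /hshift !(intrD, intrB, intrM).
  by clear h; case: eps; rewrite /= ?mulr0z; field.
by move/eqP; rewrite intr_eq0 subr_eq0 => /eqP ->.
Qed.

Section LeadingTerm.

(* [sg] selects whether "extreme" means of highest or of lowest degree. *)
Variables (eps : bool) (sg : int).
Hypothesis sg_unit : sg = 1 \/ sg = -1.

Lemma mcoeff_sbracket_lead x v N b0 :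
  is_even x -> SL N \in msupp x -> (forall n, SL n \in msupp x -> sg * n <= sg * N) ->
  b0 \in msupp v -> b0 != SC ->
  (forall b, b \in msupp v -> b != SC -> sg * deg eps b <= sg * deg eps b0) ->
  (sbracket eps x v)@_(shift b0 N) = x@_(SL N) * v@_b0 * kappa eps N b0.
Proof.
move=> xe xN Nmax vb0 b0C b0max; have eC : shift b0 N != SC by rewrite shift_eqSC.
rewrite mcoeff_sbracket (sum_seq_single xN) ?fset_uniq //.
  rewrite (sum_seq_single vb0) ?fset_uniq ?mcoeff_sbrL ?eqxx ?mulr1n //.
  move=> b _ bb0; rewrite mcoeff_sbrL // (inj_eq (@shift_inj N)) (negbTE bb0).
  by rewrite mulr0n mulr0.
move=> [n|k|] xa aN; apply: big1_seq => b /andP [_ vb].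
- rewrite mcoeff_sbrL //; have [e_eq|] := eqVneq (shift b n) (shift b0 N); last first.
    by rewrite mulr0n mulr0.
  have bC : b != SC by rewrite -(shift_eqSC b n) e_eq.
  have := congr1 (deg eps) e_eq; rewrite !deg_shift // => deg_eq.
  have hb := b0max b vb bC; have hn := Nmax n xa.
  have nN : n = N by clear -sg_unit deg_eq hb hn; case: sg_unit => ?; subst sg; lia.
  by move: aN; rewrite nN eqxx.
- by rewrite (mcoeff_even xe) ?mul0r.
- by rewrite sbrCl mcoeff0 mulr0.
Qed.

Lemma eigvec_deg_le x v (mu : CC) N :
  is_even x -> SL N \in msupp x -> 0 < sg * N ->
  (forall n, SL n \in msupp x -> sg * n <= sg * N) ->
  sbracket eps x v = mu *: v ->
  forall b, b \in msupp v -> b != SC -> sg * deg eps b <= 2 * (sg * N).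
Proof.
move=> xe xN N_gt0 Nmax xv b vb bC; rewrite leNgt; apply/negP => b_big.
have : has (predC1 SC) (msupp v) by apply/hasP; exists b.
move=> /(exists_seq_argmax (fun b => sg * deg eps b)) [b0 [vb0 b0C b0max]].
have b0_big : 2 * (sg * N) < sg * deg eps b0 := lt_le_trans b_big (b0max b vb bC).
have v_top : v@_(shift b0 N) = 0.
  have eC : shift b0 N != SC by rewrite shift_eqSC.
  apply: mcoeff_outdom; apply/negP => /b0max /(_ eC).
  by rewrite deg_shift //; case: sg_unit => ?; subst sg; lia.
have : x@_(SL N) * v@_b0 * kappa eps N b0 != 0.
  rewrite !mulf_neq0 ?mcoeff_neq0 //; apply/eqP => /(kappa_eq0 b0C).
  by case: sg_unit => ?; subst sg; lia.
by rewrite -mcoeff_sbracket_lead // xv mcoeffZ v_top mulr0 eqxx.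
Qed.

End LeadingTerm.

(** * Automorphisms act monomially on the basis *)

(* [bflip eps true] is L_m |-> L_{-m}, G_r |-> G_{-r}, C |-> C in the encoding
   G_{k+eps} = SG k; [bflip eps false] is the identity. *)
Definition bflip eps (f : bool) (b : sbasis) : sbasis :=
  if f then match b with SL m => SL (- m) | SG k => SG (- k - (eps : nat)%:Z) | SC => SC end
  else b.

Lemma bflipK eps f : involutive (bflip eps f).
Proof. by case: f => // - [m|k|] /=; rewrite ?opprK //; congr SG; lia. Qed.

Lemma bflip_inj eps f : injective (bflip eps f).
Proof. exact: inv_inj (bflipK eps f). Qed.

Lemma bflipL0 eps f : bflip eps f (SL 0) = SL 0.
Proof. by case: f. Qed.

Lemma bflip_eqSC eps f b : (bflip eps f b == SC) = (b == SC).
Proof. by case: f; case: b. Qed.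

Lemma sparity_bflip eps f b : sparity (bflip eps f b) = sparity b.
Proof. by case: f; case: b. Qed.

Lemma eigL0_bflip eps f b : eigL0 eps (bflip eps f b) = (-1) ^+ f * eigL0 eps b.
Proof.
case: f; rewrite ?mul1r //; case: b => [m|k|] /=; rewrite ?mulr0 // mulN1r opprK.
  by rewrite intrN opprK.
rewrite /gidx /hshift intrB intrN; case: eps => /=; last by rewrite !addr0 subr0 opprK.
by rewrite -[((true : nat)%:Z)%:~R]/(1 : CC); field.
Qed.

Lemma eigL0_inj eps a b : sparity a = sparity b -> a != SC -> b != SC ->
  eigL0 eps a = eigL0 eps b -> a = b.
Proof.
case: a => [m|k|]; case: b => [m'|k'|] //= _ _ _ /oppr_inj.
  by move=> /eqP; rewrite eqr_int => /eqP ->.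
by rewrite /gidx => /addIr /eqP; rewrite eqr_int => /eqP ->.
Qed.

Lemma sbr_L1_Lm1 eps : sbr eps (SL 1) (SL (-1)) = 2%:R *: << SL 0 >>.
Proof. by rewrite sbrLL [_ == _]/= mul0r scale0r addr0. Qed.

Lemma mcoeff_sbrLL_C eps m : m ^+ 2 = 1 -> (sbr eps (SL m) (SL (- m)))@_SC = 0.
Proof.
move=> m2; rewrite sbrLL mcoeffZU2 subrr eqxx mulr0n add0r mulr1n.
have -> : m ^+ 3 - m = m * (m ^+ 2 - 1) by ring.
by rewrite m2 subrr mulr0 mul0r.
Qed.

Definition aut_sign (th : SV -> SV) : bool := (th << SL 0 >>)@_(SL 0) == -1.

Section Automorphism.

Variables (eps : bool) (th : SV -> SV).
Hypothesis th_aut : is_automorphism eps th.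

Let th_lin : linear th. Proof. by case: th_aut. Qed.
Let th_br x y : th (sbracket eps x y) = sbracket eps (th x) (th y).
Proof. by case: th_aut. Qed.

Lemma aut_L0_even : is_even (th << SL 0 >>).
Proof. by case: th_aut => _ _ [th_even _] _; exact/th_even/evenU. Qed.

Lemma aut_mcoeff_neq0 b : exists e, (th << b >>)@_e != 0.
Proof.
apply: malg_mcoeff_neq0; case: th_aut => _ [g thK _] _ _.
apply: contraTneq isT => th_b0; have := thK << b >>.
by rewrite th_b0 -(linmap0 th_lin) thK => /eqP; rewrite eq_sym monalgU_eq0 oner_eq0.
Qed.

Lemma aut_mcoeff_parity b e : (th << b >>)@_e != 0 -> sparity e = sparity b.
Proof.
move=> e_nz; case: th_aut => _ _ [th_even th_odd] _.
case pb: (sparity b); case pe: (sparity e) => //; move: e_nz.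
  by rewrite (mcoeff_odd (th_odd _ (oddU pb))) ?pe ?eqxx.
by rewrite (mcoeff_even (th_even _ (evenU (negbT pb)))) ?eqxx.
Qed.

Lemma aut_surj_mcoeff e : exists b, (th << b >>)@_e != 0.
Proof.
case: th_aut => _ [g _ gK] _ _.
have : (th (g << e >>))@_e != 0 by rewrite gK mcoeffUU oner_eq0.
rewrite (linmap_linext th_lin) mcoeff_linext => /sum_seq_neq0 [b _].
by rewrite mulf_eq0 negb_or => /andP [_ nz]; exists b.
Qed.

Lemma aut_eigvec b :
  sbracket eps (th << SL 0 >>) (th << b >>) = eigL0 eps b *: th << b >>.
Proof. by rewrite -th_br sbracketUU sbrL0 (linmapZ th_lin). Qed.

Lemma aut_L0_suppL n : n != 0 -> SL n \notin msupp (th << SL 0 >>).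
Proof.
move=> n_nz; apply/negP => x_n.
pose sg : int := if 0 < n then 1 else -1.
have sg_unit : sg = 1 \/ sg = -1 by rewrite /sg; case: ifP; [left|right].
have isL : has (fun a => if a is SL _ then true else false) (msupp (th << SL 0 >>)).
  by apply/hasP; exists (SL n).
have [a [x_a L_a amax]] :=
  exists_seq_argmax (fun a => if a is SL m then sg * m else 0) isL.
case: a x_a L_a amax => [N|//|//] x_N _ Nmax.
have N_gt0 : 0 < sg * N.
  by have := Nmax _ x_n isT; rewrite /sg; case: ifP => ? /=; lia.
have [b] := aut_surj_mcoeff (SL (N + sg)); rewrite mcoeff_neq0 => b_in.
have := eigvec_deg_le sg_unit aut_L0_even x_N N_gt0 (fun m x_m => Nmax (SL m) x_m isT)
  (aut_eigvec b) b_in isT.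
by rewrite /=; case: sg_unit => ?; subst sg; lia.
Qed.

Lemma aut_L0E : th << SL 0 >> =
  (th << SL 0 >>)@_(SL 0) *: << SL 0 >> + (th << SL 0 >>)@_SC *: << SC >>.
Proof.
apply/malgP => e; rewrite mcoeffZU2.
have [<-|e0] := eqVneq (SL 0) e; first by rewrite [SC == _]/= mulr1n mulr0n addr0.
have [<-|eC] := eqVneq SC e; first by rewrite mulr0n mulr1n add0r.
rewrite mulr0n mulr0n addr0; case: e e0 eC => [n|k|] // n0 _.
  by apply/mcoeff_outdom/aut_L0_suppL; apply: contraNneq n0 => ->.
exact: mcoeff_even aut_L0_even _.
Qed.

Lemma aut_eig_coef b e : (th << b >>)@_e != 0 ->
  (th << SL 0 >>)@_(SL 0) * eigL0 eps e = eigL0 eps b.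
Proof.
move=> e_nz; apply: (mulIf e_nz); have := congr1 (mcoeff e) (aut_eigvec b).
by rewrite {1}aut_L0E mcoeff_sbracket_L0C mcoeffZ.
Qed.

Lemma aut_L0_coef_unit :
  (th << SL 0 >>)@_(SL 0) = 1 \/ (th << SL 0 >>)@_(SL 0) = -1.
Proof.
have [b b_nz] := aut_surj_mcoeff (SL 1); have [e e_nz] := aut_mcoeff_neq0 (SL 1).
have pb := aut_mcoeff_parity b_nz; have pe := aut_mcoeff_parity e_nz.
have eig_b := aut_eig_coef b_nz; have eig_e := aut_eig_coef e_nz; clear b_nz e_nz.
case: b pb eig_b => [m|//|] _ /= eig_b; case: e pe eig_e => [n|//|] _ /= eig_e.
- move: eig_b; rewrite mulrN mulr1 => /oppr_inj c0m; rewrite c0m.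
  move: eig_e; rewrite c0m mulrN -intrM => /oppr_inj /eqP; rewrite eqr_int.
  by move=> /eqP /int_mul_eq1 [] ->; [left | right].
- by move/eqP: eig_e; rewrite mulr0 eq_sym oppr_eq0 oner_eq0.
- move/eqP: eig_b; rewrite mulrN mulr1 oppr_eq0 => /eqP c0_0.
  by move/eqP: eig_e; rewrite c0_0 mul0r eq_sym oppr_eq0 oner_eq0.
- by move/eqP: eig_e; rewrite mulr0 eq_sym oppr_eq0 oner_eq0.
Qed.

Lemma aut_L0_coef : (th << SL 0 >>)@_(SL 0) = (-1) ^+ aut_sign th.
Proof.
rewrite /aut_sign; case: aut_L0_coef_unit => ->; rewrite ?eqxx //.
by rewrite (inj_eq (@signr_inj CC) false true).
Qed.

Lemma aut_monomial b : b != SL 0 -> b != SC ->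
  th << b >> = (th << b >>)@_(bflip eps (aut_sign th) b) *: << bflip eps (aut_sign th) b >>.
Proof.
move=> bL0 bC; set f := aut_sign th; set b' := bflip eps f b.
apply/malgP => e; rewrite mcoeffZU; have [<-|b'e] := eqVneq b' e; first by rewrite mulr1n.
rewrite mulr0n; apply: contraNeq b'e => e_nz.
have pe : sparity e = sparity b' by rewrite sparity_bflip (aut_mcoeff_parity e_nz).
have eig_e : eigL0 eps e = eigL0 eps b'.
  by rewrite /b' eigL0_bflip -(aut_eig_coef e_nz) aut_L0_coef signrMK.
have eC : e != SC.
  apply/eqP => eSC; move: pe eig_e; rewrite eSC /b' sparity_bflip eigL0_bflip.
  case: b bL0 bC {b' e_nz} => [m|//|//] mL0 _ _ /esym/eqP.
  by rewrite mulf_eq0 signr_eq0 oppr_eq0 intr_eq0 => /eqP m0; rewrite m0 eqxx in mL0.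
by apply/eqP/esym/(@eigL0_inj eps); rewrite // /b' bflip_eqSC.
Qed.

Lemma aut_L0 : th << SL 0 >> = (-1) ^+ aut_sign th *: << SL 0 >>.
Proof.
have C0 : (th << SL 0 >>)@_SC = 0.
  have := congr1 (mcoeff SC) (th_br << SL 1 >> << SL (-1) >>).
  rewrite sbracketUU sbr_L1_Lm1 (linmapZ th_lin) mcoeffZ.
  rewrite [in RHS](@aut_monomial (SL 1)) // [in RHS](@aut_monomial (SL (-1))) //.
  rewrite mcoeff_sbracketZU.
  have -> : (sbr eps (bflip eps (aut_sign th) (SL 1))
                     (bflip eps (aut_sign th) (SL (-1))))@_SC = 0.
    by case: (aut_sign th); apply: mcoeff_sbrLL_C.
  by rewrite [in RHS]mulr0 => /eqP; rewrite mulf_eq0 pnatr_eq0 => /eqP.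
by rewrite aut_L0E C0 scale0r addr0 aut_L0_coef.
Qed.

Lemma aut_basis b : b != SC ->
  th << b >> = (th << b >>)@_(bflip eps (aut_sign th) b) *: << bflip eps (aut_sign th) b >>.
Proof.
have [->|bL0] := eqVneq b (SL 0); last exact: aut_monomial.
by rewrite bflipL0 aut_L0_coef aut_L0.
Qed.

End Automorphism.

(** * Automorphisms are determined by seven basis vectors *)

Lemma sbrLL_kappa eps j m : j + m != 0 ->
  sbr eps (SL j) (SL m) = kappa eps j (SL m) *: << shift (SL m) j >>.
Proof. by move=> jm; rewrite sbrLL (negbTE jm) [X in _ + X]scale0r addr0 [j + m]addrC. Qed.

Lemma sbrLG_kappa eps j k :
  sbr eps (SL j) (SG k) = kappa eps j (SG k) *: << shift (SG k) j >>.
Proof. by rewrite sbrLG [j + k]addrC. Qed.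

Lemma kappaG_neq0 eps j k :
  (kappa eps j (SG k) != 0) || (kappa eps (j + 1) (SG (k - 1)) != 0).
Proof.
rewrite -negb_and; apply/negP => /andP [/eqP k1 /eqP k2].
have : kappa eps (j + 1) (SG (k - 1)) - kappa eps j (SG k) = 3%:R / 2%:R.
  by rewrite /= /gidx intrD intrB mulr1z; field.
by rewrite k1 k2 subrr => /eqP; rewrite eq_sym mulf_eq0 invr_eq0 !pnatr_eq0.
Qed.

Section Agreement.

Variables (eps : bool) (th1 th2 : SV -> SV).
Hypotheses (th1_aut : is_automorphism eps th1) (th2_aut : is_automorphism eps th2).

Lemma aut_agree_bracket p q (c : CC) z : c != 0 -> sbracket eps p q = c *: z ->
  th1 p = th2 p -> th1 q = th2 q -> th1 z = th2 z.
Proof.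
move=> c_nz pqz e_p e_q; apply: (scalerI c_nz).
case: th1_aut th2_aut => lin1 _ _ br1 [lin2 _ _ br2].
by rewrite -(linmapZ lin1) -(linmapZ lin2) -pqz br1 br2 e_p e_q.
Qed.

Lemma aut_agree_shift j b t :
  sbr eps (SL j) b = kappa eps j b *: << shift b j >> -> kappa eps j b != 0 ->
  shift b j = t -> th1 << SL j >> = th2 << SL j >> -> th1 << b >> = th2 << b >> ->
  th1 << t >> = th2 << t >>.
Proof. by move=> sbrE k_nz <-; apply: aut_agree_bracket k_nz _; rewrite sbracketUU. Qed.

Lemma aut_agree_C : th1 << SL 0 >> = th2 << SL 0 >> ->
  th1 << SL 2 >> = th2 << SL 2 >> -> th1 << SL (-2) >> = th2 << SL (-2) >> ->
  th1 << SC >> = th2 << SC >>.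
Proof.
move=> e0 e2 em2; case: th1_aut th2_aut => lin1 _ _ br1 [lin2 _ _ br2].
have c_nz : (6%:R / 12%:R : CC) != 0 by rewrite mulf_neq0 ?invr_eq0 ?pnatr_eq0.
have E : sbr eps (SL 2) (SL (-2)) = 4%:R *: << SL 0 >> + (6%:R / 12%:R) *: << SC >>.
  by [].
have := br1 << SL 2 >> << SL (-2) >>.
rewrite e2 em2 -br2 sbracketUU E lin1 lin2 e0 => /addrI.
by rewrite (linmapZ lin1) (linmapZ lin2) => /(scalerI c_nz).
Qed.

Lemma aut_agree_L : th1 << SL 0 >> = th2 << SL 0 >> ->
  th1 << SL 1 >> = th2 << SL 1 >> -> th1 << SL (-1) >> = th2 << SL (-1) >> ->
  th1 << SL 2 >> = th2 << SL 2 >> -> th1 << SL (-2) >> = th2 << SL (-2) >> ->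
  forall m, th1 << SL m >> = th2 << SL m >>.
Proof.
move=> e0 e1 em1 e2 em2; elim/int_ind => [|n IH|n IH]; first exact: e0.
  case: n IH => [|[|n]] IH; [exact: e1 | exact: e2 |].
  apply: (aut_agree_shift (sbrLL_kappa _ _)) e1 IH => //=.
    by rewrite intr_eq0 subr_eq0.
  by congr SL; lia.
case: n IH => [|[|n]] IH; [exact: em1 | exact: em2 |].
apply: (aut_agree_shift (sbrLL_kappa _ _)) em1 IH => //=.
  by rewrite intr_eq0 subr_eq0.
by congr SL; lia.
Qed.

Lemma aut_agree_G :
  th1 << SL 1 >> = th2 << SL 1 >> -> th1 << SL (-1) >> = th2 << SL (-1) >> ->
  th1 << SL 2 >> = th2 << SL 2 >> -> th1 << SL (-2) >> = th2 << SL (-2) >> ->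
  th1 << SG 0 >> = th2 << SG 0 >> -> th1 << SG (-1) >> = th2 << SG (-1) >> ->
  forall k, th1 << SG k >> = th2 << SG k >>.
Proof.
move=> e1 em1 e2 em2 g0 gm1.
have up k : th1 << SG k >> = th2 << SG k >> -> th1 << SG (k - 1) >> = th2 << SG (k - 1) >> ->
    th1 << SG (k + 1) >> = th2 << SG (k + 1) >>.
  move=> gk gk1; case/orP: (kappaG_neq0 eps 1 k) => k_nz.
    exact: (aut_agree_shift (sbrLG_kappa _ _ _)) k_nz _ e1 gk.
  by apply: (aut_agree_shift (sbrLG_kappa _ _ _)) k_nz _ e2 gk1; congr SG; lia.
have down k : th1 << SG k >> = th2 << SG k >> -> th1 << SG (k - 1) >> = th2 << SG (k - 1) >> ->
    th1 << SG (k - 2) >> = th2 << SG (k - 2) >>.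
  move=> gk gk1; case/orP: (kappaG_neq0 eps (-2) k) => k_nz.
    exact: (aut_agree_shift (sbrLG_kappa _ _ _)) k_nz _ em2 gk.
  by apply: (aut_agree_shift (sbrLG_kappa _ _ _)) k_nz _ em1 gk1; congr SG; lia.
suff agree2 k : th1 << SG k >> = th2 << SG k >> /\ th1 << SG (k - 1) >> = th2 << SG (k - 1) >>.
  by move=> k; case: (agree2 k).
elim/int_ind: k => [|n [gn gn1]|n [gn gn1]]; first by split; [exact: g0 | exact: gm1].
  rewrite (_ : n.+1%:Z = n%:Z + 1); last by lia.
  by rewrite addrK; split; [exact: up | exact: gn].
rewrite (_ : - n.+1%:Z = - n%:Z - 1); last by lia.
by split; [exact: gn1 | rewrite -addrA -opprD; exact: down].
Qed.

Lemma aut_agree_of_sum s : uniq s -> SL 0 \in s -> SC \notin s ->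
  th1 (\sum_(b <- s) << b >>) = th2 (\sum_(b <- s) << b >>) ->
  forall b, b \in s -> th1 << b >> = th2 << b >>.
Proof.
move=> us s0 sC E.
have coef th b : is_automorphism eps th -> b \in s ->
    (th (\sum_(b <- s) << b >>))@_(bflip eps (aut_sign th) b) =
    (th << b >>)@_(bflip eps (aut_sign th) b).
  move=> th_aut bs; case: (th_aut) => th_lin _ _ _.
  rewrite (big_morph th (linmapD th_lin) (linmap0 th_lin)).
  have -> : \sum_(b <- s) th << b >> = \sum_(b <- s)
      (th << b >>)@_(bflip eps (aut_sign th) b) *: << bflip eps (aut_sign th) b >>.
    by apply: eq_big_seq => b' b's; apply: (aut_basis th_aut); apply: contraNneq sC => <-.
  exact: mcoeff_sum_inj (@bflip_inj eps _) us bs.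
have signL0 th : is_automorphism eps th ->
    (th (\sum_(b <- s) << b >>))@_(SL 0) = (-1) ^+ aut_sign th.
  move=> th_aut; rewrite -(bflipL0 eps (aut_sign th)) coef //.
  by rewrite bflipL0 (aut_L0_coef th_aut).
have f12 : aut_sign th1 = aut_sign th2.
  by apply: (@signr_inj CC); rewrite -(signL0 _ th1_aut) E (signL0 _ th2_aut).
move=> b bs; have bC : b != SC by apply: contraNneq sC => <-.
rewrite (aut_basis th1_aut bC) (aut_basis th2_aut bC).
by rewrite -(coef _ _ th1_aut bs) -(coef _ _ th2_aut bs) f12 E.
Qed.

Definition sgens : seq sbasis := [:: SL 0; SL 1; SL (-1); SL 2; SL (-2); SG 0; SG (-1)].

Definition sgens_sum : SV := \sum_(b <- sgens) << b >>.

Lemma aut_agree_of_gens : th1 sgens_sum = th2 sgens_sum -> th1 =1 th2.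
Proof.
move=> E; have eg b : b \in sgens -> th1 << b >> = th2 << b >>.
  exact: aut_agree_of_sum.
have eL := aut_agree_L (eg (SL 0) isT) (eg (SL 1) isT) (eg (SL (-1)) isT)
  (eg (SL 2) isT) (eg (SL (-2)) isT).
have eG := aut_agree_G (eL 1) (eL (-1)) (eL 2) (eL (-2)) (eg (SG 0) isT) (eg (SG (-1)) isT).
have eC := aut_agree_C (eL 0) (eL 2) (eL (-2)).
case: th1_aut th2_aut => lin1 _ _ _ [lin2 _ _ _] y.
by rewrite (linmap_linext lin1) (linmap_linext lin2); apply: eq_linext => -[].
Qed.

End Agreement.

Lemma eq_is_automorphism eps (phi th : SV -> SV) :
  phi =1 th -> is_automorphism eps th -> is_automorphism eps phi.
Proof.
move=> phi_th [th_lin [g thK gK] [th_even th_odd] th_br]; split.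
- by move=> c x y; rewrite !phi_th th_lin.
- by exists g => x; rewrite phi_th ?thK ?gK.
- by split=> x; rewrite phi_th; [exact: th_even | exact: th_odd].
- by move=> x y; rewrite !phi_th th_br.
Qed.

Theorem theorem5p2 (eps : bool) (phi : SV -> SV) :
  is_2local_automorphism eps phi -> is_automorphism eps phi.
Proof.
move=> phi_2loc; have [th [th_aut [phi_x _]]] := phi_2loc sgens_sum sgens_sum.
apply: (eq_is_automorphism _ th_aut) => y.
have [th' [th'_aut [phi_x' phi_y]]] := phi_2loc sgens_sum y.
by rewrite phi_y; apply: (aut_agree_of_gens th'_aut th_aut); rewrite -phi_x'.
Qed.
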